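(* Fix $n\ge1$ and a polynomial $h(x)=h_0+h_1x+\dots+h_{n+1}x^{n+1}$ with $h(1)\ne0$. Define $(a_k)_{k\ge0}$ by $\sum_{k\ge0}a_kx^k=h(x)/(1-x)^{n+1}$, and for each integer $b\ge1$ let $h^{\langle b\rangle}(x)$ be the polynomial of degree at most $n+1$ such that $\sum_{k\ge0}a_{bk}x^k=h^{\langle b\rangle}(x)/(1-x)^{n+1}$. Then, coefficientwise as $b\to\infty$, $$\frac{h^{\langle b\rangle}(x)}{b^n\,h(1)}\longrightarrow\frac{p_n(x)}{n!},$$ where $p_n(x)=\sum_{j\ge0}A(n,j)x^{j+1}$ is the $n$th Eulerian polynomial.
   Context: $A(n,j)$ is the number of permutations $\sigma\in S_n$ with exactly $j$ descents (a descent at $i$, $1\le i\le n-1$, means $\sigma(i+1)<\sigma(i)$). *)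

From HB Require Import structures.
From mathcomp Require Import all_boot all_order all_algebra all_fingroup.
Set Implicit Arguments. Unset Strict Implicit. Unset Printing Implicit Defensive.
Import Order.TTheory GRing.Theory Num.Theory.
Local Open Scope ring_scope.

Definition des (n : nat) (s : 'S_n) : nat :=
  #|[set i : 'I_n | [exists j : 'I_n, (val j == i.+1) && (s j < s i)%N]]|.

Definition eulerianA (n j : nat) : nat := #|[set s : 'S_n | des s == j]|.

(* k-th coefficient of the n-th Eulerian polynomial p_n(x) = sum_j A(n,j) x^(j+1). *)
Definition eulerian_coef (n k : nat) : nat :=
  if k is k'.+1 then eulerianA n k' else 0%N.

(* a_k = [x^k] h(x)/(1-x)^(n+1), using 1/(1-x)^(n+1) = sum_m C(n+m,n) x^m. *)
Definition ser_coef (R : ringType) (n : nat) (h : {poly R}) (k : nat) : R :=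
  \sum_(i < k.+1) h`_i * ('C(n + (k - i), n))%:R.

(* [x^k] of (1-x)^(n+1) * sum_m a_(b m) x^m ; this is the k-th coefficient of h^<b>. *)
Definition hb_coef (R : ringType) (n : nat) (h : {poly R}) (b k : nat) : R :=
  \sum_(i < k.+1) (-1) ^+ i * ('C(n.+1, i))%:R * ser_coef n h (b * (k - i)).

Definition converges_to (R : numFieldType) (u : nat -> R) (l : R) : Prop :=
  forall eps : R, 0 < eps -> exists N : nat, forall m : nat, (N <= m)%N -> `|u m - l| < eps.

From HB Require Import structures.
From mathcomp Require Import all_boot all_order all_algebra all_fingroup.
From mathcomp Require Import zify ring.
Set Implicit Arguments. Unset Strict Implicit. Unset Printing Implicit Defensive.
Import Order.TTheory GRing.Theory Num.Theory.

(* A permutation of S_n is recorded by its list of values,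
      so A(n,j) counts the permutations of the list [0, ..., n-1] with j
      descents.  Each such list of length n+1 arises exactly once by inserting
      n into a list of length n; inserting a maximum into a list with d
      descents keeps d descents at d+1 positions and creates one more at the
      other n-d positions.  Hence A(n+1,j) = (j+1) A(n,j) + (n+1-j) A(n,j-1).
   2. Algebra.  The alternating sums
        E(n,u) = sum_(i <= u) (-1)^i C(n+1,i) (u-i)^n
      satisfy the same recurrence and initial values, which proves the
      classical explicit formula A(n,j) = E(n,j+1); thus E(n,k) is the k-th
      coefficient of p_n.
   3. Analysis.  With an elementary epsilon-N limit calculus,
      C(n + bm - l, n) / b^n -> m^n / n!, so a_(bm) / b^n -> h(1) m^n / n!, and
      [x^k] h^<b> = sum_i (-1)^i C(n+1,i) a_(b(k-i)) divided by b^n tends to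
      h(1) E(n,k) / n!. *)

Fixpoint descents (s : seq nat) : nat :=
  if s is x :: s' then (if s' is y :: _ then (y < x) + descents s' else 0) else 0.

Definition insert_at (m p : nat) (t : seq nat) : seq nat := take p t ++ m :: drop p t.
Arguments insert_at : simpl never.

Lemma descents_cons2 x y s : descents [:: x, y & s] = (y < x) + descents (y :: s).
Proof. by []. Qed.

Lemma insert_at0 m t : insert_at m 0 t = m :: t.
Proof. by rewrite /insert_at take0 drop0. Qed.

Lemma insert_atS m p x s : insert_at m p.+1 (x :: s) = x :: insert_at m p s.
Proof. by []. Qed.

Lemma insert_at_nil m p : insert_at m p [::] = [:: m].
Proof. by []. Qed.

Lemma descents_le t : descents t <= (size t).-1.
Proof.
elim: t => [|x [|y s] IH] //; rewrite descents_cons2 /=; move: IH => /=; lia.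
Qed.

Section InsertMax.
Variable m : nat.

Lemma descents_insert_max t p : all (fun x => x < m) t ->
  descents t <= descents (insert_at m p t) <= (descents t).+1.
Proof.
elim: t p => [|x s IH] p; first by rewrite insert_at_nil.
move=> /andP[/= xm sm]; have mx : (m < x) = false by rewrite ltnNge ltnW.
case: p => [|p].
  by case: s {IH sm} => [|y s]; rewrite insert_at0 ?descents_cons2 xm //=; lia.
case: s IH sm => [|y s] IH sm.
  by case: p => [|p]; rewrite insert_atS insert_at_nil /= mx.
have /andP[ym _] := sm; rewrite /= in ym.
case: p => [|p].
  by rewrite insert_atS insert_at0 !descents_cons2 ym mx; lia.
by have := IH p.+1 sm; rewrite !insert_atS !descents_cons2 -insert_atS; lia.
Qed.

(* Exactly size t - descents t insertion positions create a new descent: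
   the front of the list and the gaps inside an ascent. *)
Lemma sum_descent_increments t : all (fun x => x < m) t ->
  \sum_(p < (size t).+1) (descents (insert_at m p t) - descents t) = size t - descents t.
Proof.
elim: t => [|x s IH]; first by rewrite big_ord1 insert_at_nil.
move=> /andP[/= xm sm]; have mx : (m < x) = false by rewrite ltnNge ltnW.
case: s IH sm => [|y s] IH sm.
  by rewrite big_ord_recl big_ord1 insert_at0 insert_atS insert_at_nil /= xm mx.
have /andP[ym _] := sm; rewrite /= in ym.
have shift p : descents (insert_at m p.+2 [:: x, y & s]) - descents [:: x, y & s] =
               descents (insert_at m p.+1 (y :: s)) - descents (y :: s).
  by rewrite insert_atS descents_cons2 -insert_atS descents_cons2 subnDl.
rewrite 2!big_ord_recl (eq_bigr (fun p : 'I_(size (y :: s)) =>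
    descents (insert_at m (lift ord0 p) (y :: s)) - descents (y :: s))); last first.
  by move=> p _; exact: shift.
move: (IH sm) (descents_le (y :: s)); rewrite big_ord_recl insert_at0 !descents_cons2 ym.
rewrite xm mx /=; lia.
Qed.

(* Number of insertion positions giving j descents, in the form needed for
   the Eulerian recurrence: d + 1 positions keep d descents, size t - d add one. *)
Lemma count_insert_max t j : all (fun x => x < m) t ->
  \sum_(p < (size t).+1) (descents (insert_at m p t) == j) =
  j.+1 * (descents t == j) + (if j is j'.+1 then (size t - j') * (descents t == j') else 0).
Proof.
move=> tm; set d := descents t.
have bounds p := descents_insert_max p tm.
have split_eq p : (descents (insert_at m p t) == j) =
    (d == j) * (descents (insert_at m p t) - d == 0) +
    (d.+1 == j) * (descents (insert_at m p t) - d) :> nat.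
  by have := bounds p; rewrite -/d; lia.
have keep : \sum_(p < (size t).+1) (descents (insert_at m p t) - d == 0) = d.+1.
  have total : \sum_(p < (size t).+1)
      ((descents (insert_at m p t) - d == 0) + (descents (insert_at m p t) - d)) = (size t).+1.
    rewrite -[RHS]card_ord -sum1_card; apply: eq_bigr => p _.
    by have := bounds p; rewrite -/d; lia.
  move: total (descents_le t); rewrite big_split /= sum_descent_increments // -/d; lia.
under eq_bigr => p _ do rewrite split_eq.
rewrite big_split -!big_distrr /= keep.
rewrite sum_descent_increments // -/d.
by case: j {split_eq} => [|j]; move: (descents_le t); rewrite -/d; lia.
Qed.
End InsertMax.

Lemma perm_insert_at m p t : perm_eq (insert_at m p t) (m :: t).
Proof. by rewrite /insert_at -cat1s perm_catCA /= cat_take_drop. Qed.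

Lemma index_insert_at m p t : m \notin t -> p <= size t -> index m (insert_at m p t) = p.
Proof.
move=> mt pt; rewrite /insert_at index_cat /= eqxx addn0 size_takel //.
by case: ifP => // /mem_take; rewrite (negbTE mt).
Qed.

Lemma rem_insert_at m p t : m \notin t -> p <= size t -> rem m (insert_at m p t) = t.
Proof.
move=> mt pt; rewrite remE index_insert_at // /insert_at.
rewrite take_size_cat ?size_takel // drop_cat size_takel // ltnNge leqnSn /= subSnn /=.
by rewrite drop0 cat_take_drop.
Qed.

Lemma insert_at_rem m t : m \in t -> insert_at m (index m t) (rem m t) = t.
Proof.
move=> mt; have lt_mt : index m t < size t by rewrite index_mem.
rewrite /insert_at remE take_size_cat ?size_takel ?(ltnW lt_mt) //.
rewrite drop_size_cat ?size_takel ?(ltnW lt_mt) //.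
by rewrite -[RHS](cat_take_drop (index m t)) (drop_nth m lt_mt) nth_index.
Qed.

Definition perm_lists (n : nat) : seq (seq nat) := permutations (iota 0 n).

Definition list_eulerian (n j : nat) : nat := \sum_(t <- perm_lists n) (descents t == j).

Lemma mem_perm_lists n t : (t \in perm_lists n) = perm_eq t (iota 0 n).
Proof. exact: mem_permutations. Qed.

Lemma perm_iotaS n : perm_eq (iota 0 n.+1) (n :: iota 0 n).
Proof. by rewrite -addn1 iotaD add0n cats1 perm_rcons. Qed.

Lemma perm_lists_shape n t : t \in perm_lists n ->
  [/\ size t = n, n \notin t & all (fun x => x < n) t].
Proof.
rewrite mem_perm_lists => tn; split.
- by rewrite (perm_size tn) size_iota.
- by rewrite (perm_mem tn) mem_iota ltnn andbF.
- by apply/allP => x; rewrite (perm_mem tn) mem_iota.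
Qed.

Lemma perm_lists_S n :
  perm_eq (perm_lists n.+1) [seq insert_at n p t | t <- perm_lists n, p <- iota 0 n.+1].
Proof.
apply: uniq_perm; first exact: permutations_uniq.
  apply: allpairs_uniq; [exact: permutations_uniq | exact: iota_uniq |].
  move=> [t1 p1] [t2 p2] /allpairsP[[a b] [ha hb ->]] /allpairsP[[c d] [hc hd ->]] /= e.
  have [sa na _] := perm_lists_shape ha; have [sc nc _] := perm_lists_shape hc.
  rewrite !mem_iota add0n ltnS -sa in hb; rewrite !mem_iota add0n ltnS -sc in hd.
  have := congr1 (index n) e; have := congr1 (rem n) e.
  by rewrite !index_insert_at ?rem_insert_at // => -> ->.
move=> t; apply/idP/allpairsP => [tn | [[s p] [sn _ ->]]]; last first.
  rewrite !mem_perm_lists in sn *.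
  by rewrite (permPl (perm_insert_at _ _ _)) (permPr (perm_iotaS n)) perm_cons.
have [st _ _] := perm_lists_shape tn.
have tn' : perm_eq t (iota 0 n.+1) by rewrite -mem_perm_lists.
have nt : n \in t by rewrite (perm_mem tn') mem_iota add0n ltnSn.
exists (rem n t, index n t); split; last by rewrite insert_at_rem.
  rewrite mem_perm_lists -(perm_cons n).
  by rewrite -(permPl (perm_to_rem nt)) -(permPr (perm_iotaS n)).
by rewrite mem_iota add0n -st index_mem.
Qed.

Lemma list_eulerian_S n j : list_eulerian n.+1 j =
  j.+1 * list_eulerian n j + (if j is j'.+1 then (n - j') * list_eulerian n j' else 0).
Proof.
rewrite /list_eulerian (perm_big _ (perm_lists_S n)) big_allpairs_dep.
rewrite (eq_big_seq (fun t => j.+1 * (descents t == j) +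
    (if j is j'.+1 then (n - j') * (descents t == j') else 0))); last first.
  move=> t tn; have [st _ t_lt] := perm_lists_shape tn.
  have -> : iota 0 n.+1 = index_iota 0 (size t).+1 by rewrite /index_iota subn0 st.
  by rewrite big_mkord count_insert_max // st.
rewrite big_split -big_distrr /=; congr (_ + _).
by case: j => [|j] /=; [rewrite big1 | rewrite big_distrr].
Qed.

Lemma descents_nth t :
  descents t = \sum_(i < size t) ((i.+1 < size t) && (nth 0 t i.+1 < nth 0 t i)).
Proof.
elim: t => [|x s IH]; first by rewrite big_ord0.
rewrite big_ord_recl; case: s IH => [|y s] IH; first by rewrite big_ord0.
by rewrite descents_cons2 IH.
Qed.

Definition perm_values (n : nat) (s : 'S_n) : seq nat := [seq val (s i) | i <- enum 'I_n].

Lemma size_perm_values n (s : 'S_n) : size (perm_values s) = n.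
Proof. by rewrite size_map size_enum_ord. Qed.

Lemma nth_perm_values n (s : 'S_n) (i : 'I_n) : nth 0 (perm_values s) i = s i.
Proof. by rewrite (nth_map i) ?size_enum_ord // nth_ord_enum. Qed.

Lemma descents_perm_values n (s : 'S_n) : descents (perm_values s) = des s.
Proof.
rewrite descents_nth /des size_perm_values -sum1_card [RHS]big_mkcond /=.
apply: eq_bigr => i _; rewrite inE.
case: (ltnP i.+1 n) => [lt_in | le_ni] /=.
  rewrite (nth_perm_values s (Ordinal lt_in)) nth_perm_values.
  case: existsP => [[j /andP[/eqP ji sji]] | no_j].
    have -> : Ordinal lt_in = j by apply: val_inj; rewrite /= ji.
    by rewrite sji.
  by case: ltnP => // desc_i; case: no_j; exists (Ordinal lt_in); rewrite eqxx.
by case: existsP => // [[j /andP[/eqP ji _]]]; have := ltn_ord j; rewrite ji ltnNge le_ni.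
Qed.

Lemma perm_values_inj n : injective (@perm_values n).
Proof.
move=> s1 s2 e; apply/permP => i; apply: val_inj.
by move: (congr1 (nth 0 ^~ i) e); rewrite !nth_perm_values.
Qed.

Lemma perm_values_mem n (s : 'S_n) : perm_values s \in perm_lists n.
Proof.
rewrite mem_perm_lists; apply: uniq_perm; [|exact: iota_uniq|].
  by rewrite map_inj_uniq ?enum_uniq // => i j /val_inj /perm_inj.
move=> x; rewrite mem_iota add0n /=; apply/mapP/idP => [[i _ ->] | lt_xn].
  exact: ltn_ord.
by exists ((s^-1)%g (Ordinal lt_xn)); rewrite ?mem_enum ?permKV.
Qed.

Lemma perm_values_onto n t : t \in perm_lists n -> exists s : 'S_n, perm_values s = t.
Proof.
move=> tn; have [st _ t_lt] := perm_lists_shape tn.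
have ut : uniq t by move: tn; rewrite mem_perm_lists => /perm_uniq ->; exact: iota_uniq.
have lt_nth (i : 'I_n) : nth 0 t i < n by apply: (allP t_lt); rewrite mem_nth ?st.
pose f (i : 'I_n) : 'I_n := Ordinal (lt_nth i).
have f_inj : injective f.
  by move=> i j /(congr1 val) /eqP; rewrite /= nth_uniq ?st // => /eqP /val_inj.
exists (perm f_inj); apply: (@eq_from_nth _ 0); first by rewrite size_perm_values st.
by move=> i; rewrite size_perm_values => lt_in; rewrite (nth_perm_values _ (Ordinal lt_in)) permE.
Qed.

Lemma perm_lists_values n : perm_eq [seq perm_values s | s <- enum 'S_n] (perm_lists n).
Proof.
apply: uniq_perm; last 1 first.
- move=> t; apply/mapP/idP => [[s _ ->] | tn]; first exact: perm_values_mem.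
  by have [s <-] := perm_values_onto tn; exists s; rewrite ?mem_enum.
- by rewrite map_inj_uniq ?enum_uniq //; exact: perm_values_inj.
- exact: permutations_uniq.
Qed.

Lemma eulerianA_list n j : eulerianA n j = list_eulerian n j.
Proof.
rewrite /list_eulerian -(perm_big _ (perm_lists_values n)) big_map big_enum /=.
rewrite /eulerianA -sum1_card big_mkcond /=; apply: eq_bigr => s _.
by rewrite inE descents_perm_values.
Qed.

Lemma list_eulerian0 j : list_eulerian 0 j = (j == 0).
Proof. by rewrite /list_eulerian /perm_lists /= big_seq1 eq_sym. Qed.

Lemma list_eulerian_large n j : 0 < n <= j -> list_eulerian n j = 0.
Proof.
move=> /andP[n_gt0 le_nj]; rewrite /list_eulerian big_seq big1 // => t tn.
have [st _ _] := perm_lists_shape tn; have := descents_le t; rewrite st.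
by case: eqP => // ->; lia.
Qed.

Local Open Scope ring_scope.

Section AlternatingSums.
Variable R : comNzRingType.

Definition alt_power_sum (c m u : nat) : R :=
  \sum_(i < u.+1) (-1) ^+ i * ('C(c, i))%:R * ((u - i)%:R) ^+ m.

(* Pascal's rule on C(c+1,i) splits the sum into two shifted sums. *)
Lemma alt_power_sum_pascal c m u :
  alt_power_sum c.+1 m u.+1 = alt_power_sum c m u.+1 - alt_power_sum c m u.
Proof.
rewrite /alt_power_sum big_ord_recl [in X in _ = X - _]big_ord_recl /= !bin0 subn0.
under eq_bigr => i _ do rewrite /bump /= add1n binS natrD mulrDr mulrDl subSS.
rewrite big_split /= addrA; congr (_ + _).
by rewrite -sumrN; apply: eq_bigr => i _; rewrite exprS !mulN1r !mulNr.
Qed.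

(* Writing (u+1-i)^(m+1) = (u+1) (u+1-i)^m - i (u+1-i)^m and using
   i C(c+1,i) = (c+1) C(c,i-1). *)
Lemma alt_power_sum_mul c m u : alt_power_sum c.+1 m.+1 u.+1 =
  u.+1%:R * alt_power_sum c.+1 m u.+1 + c.+1%:R * alt_power_sum c m u.
Proof.
rewrite /alt_power_sum.
have split_power (i : 'I_u.+2) : (-1) ^+ i * ('C(c.+1, i))%:R * ((u.+1 - i)%:R) ^+ m.+1 =
    u.+1%:R * ((-1) ^+ i * ('C(c.+1, i))%:R * ((u.+1 - i)%:R) ^+ m)
    - (-1) ^+ i * (i * 'C(c.+1, i))%:R * ((u.+1 - i)%:R) ^+ m :> R.
  have le_iu : (i <= u.+1)%N by rewrite -ltnS ltn_ord.
  by rewrite exprS (natrB _ le_iu) natrM; ring.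
rewrite (eq_bigr _ (fun i _ => split_power i)) sumrB -mulr_sumr; congr (_ + _).
rewrite big_ord_recl /= mul0n mulr0 mul0r add0r -sumrN mulr_sumr.
apply: eq_bigr => i _; rewrite /bump /= add1n -(mul_bin_diag c.+1 i) natrM subSS exprS.
ring.
Qed.

Definition eulerian_alt (n u : nat) : R := alt_power_sum n.+1 n u.

Lemma eulerian_alt_S n j : eulerian_alt n.+1 j.+1 =
  j.+1%:R * eulerian_alt n j.+1 + (n.+2%:R - j.+1%:R) * eulerian_alt n j.
Proof.
rewrite /eulerian_alt alt_power_sum_mul alt_power_sum_pascal; ring.
Qed.

Lemma eulerian_alt_at0 n : eulerian_alt n.+1 0 = 0.
Proof. by rewrite /eulerian_alt /alt_power_sum big_ord1 subn0 expr0n /= mulr0. Qed.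

Lemma eulerian_alt_dim0 u : eulerian_alt 0 u = (u == 0)%:R.
Proof.
rewrite /eulerian_alt /alt_power_sum; case: u => [|u].
  by rewrite big_ord1 !expr0 bin0 !mulr1.
rewrite 2!big_ord_recl big1 => [|i _]; last by rewrite bin_small // mulr0 mul0r.
by rewrite /= !expr0 !mulr1 expr1 addr0 subrr.
Qed.
End AlternatingSums.

Lemma list_eulerian_alt (R : comNzRingType) n j : (0 < n)%N ->
  (list_eulerian n j)%:R = eulerian_alt R n j.+1.
Proof.
case: n => // n _; elim: n j => [|n IH] j.
  rewrite list_eulerian_S eulerian_alt_S !eulerian_alt_dim0 !list_eulerian0.
  by case: j => [|j] /=; rewrite ?sub0n ?mul0n; ring.
rewrite list_eulerian_S eulerian_alt_S -IH natrD natrM; congr (_ + _).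
case: j => [|j]; first by rewrite eulerian_alt_at0 mulr0.
rewrite -IH natrM; case: (leqP j n.+1) => [le_jn | lt_nj].
  by rewrite -natrB ?subSS.
by rewrite list_eulerian_large ?mulr0 // (ltnW lt_nj).
Qed.

Lemma eulerian_coef_alt (R : comNzRingType) n k : (0 < n)%N ->
  (eulerian_coef n k)%:R = eulerian_alt R n k.
Proof.
case: k => [|k] n_gt0 /=; last by rewrite eulerianA_list list_eulerian_alt.
by case: n n_gt0 => // n _; rewrite eulerian_alt_at0.
Qed.

Section LimitAlgebra.
Variable R : numFieldType.
Implicit Types (u v : nat -> R) (a c : R).

Lemma converges_const c : converges_to (fun _ => c) c.
Proof. by move=> eps eps_gt0; exists 0%N => m _; rewrite subrr normr0. Qed.

Lemma converges_eventually u v a N0 : (forall m, (N0 <= m)%N -> u m = v m) ->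
  converges_to u a -> converges_to v a.
Proof.
move=> uv cu eps /cu [N cuN]; exists (maxn N N0) => m; rewrite geq_max => /andP[le_Nm le_N0m].
by rewrite -uv // cuN.
Qed.

Lemma converges_ext u v a : u =1 v -> converges_to u a -> converges_to v a.
Proof. by move=> uv; apply: (@converges_eventually _ _ _ 0) => m _. Qed.

Lemma converges_add u v a c : converges_to u a -> converges_to v c ->
  converges_to (fun m => u m + v m) (a + c).
Proof.
move=> cu cv eps eps_gt0; have eps2_gt0 : 0 < eps / 2 by rewrite divr_gt0.
have [N1 cuN] := cu _ eps2_gt0; have [N2 cvN] := cv _ eps2_gt0.
exists (maxn N1 N2) => m; rewrite geq_max => /andP[le1 le2].
rewrite opprD addrACA (le_lt_trans (ler_normD _ _)) // [eps]splitr.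
by rewrite ltrD ?cuN ?cvN.
Qed.

Lemma converges_bounded u a : converges_to u a ->
  exists N, forall m, (N <= m)%N -> `|u m| < `|a| + 1.
Proof.
move=> /(_ 1 ltr01) [N cuN]; exists N => m /cuN close.
by rewrite -(subrK a (u m)) (le_lt_trans (ler_normD _ _)) // addrC ltrD2l.
Qed.

Lemma converges_mul u v a c : converges_to u a -> converges_to v c ->
  converges_to (fun m => u m * v m) (a * c).
Proof.
move=> cu cv eps eps_gt0.
have Ma_gt0 : 0 < `|a| + 1 by rewrite ltr_wpDl.
have Mc_gt0 : 0 < `|c| + 1 by rewrite ltr_wpDl.
have [N1 bu] := converges_bounded cu.
have epsa_gt0 : 0 < eps / 2 / (`|a| + 1) by rewrite !divr_gt0.
have epsc_gt0 : 0 < eps / 2 / (`|c| + 1) by rewrite !divr_gt0.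
have [N2 cvN] := cv _ epsa_gt0; have [N3 cuN] := cu _ epsc_gt0.
exists (maxn N1 (maxn N2 N3)) => m; rewrite !geq_max => /and3P[le1 le2 le3].
have -> : u m * v m - a * c = u m * (v m - c) + (u m - a) * c.
  by rewrite mulrBr mulrBl addrA subrK.
rewrite (le_lt_trans (ler_normD _ _)) // [eps]splitr ltrD // normrM.
  apply: (@le_lt_trans _ _ ((`|a| + 1) * `|v m - c|)).
    by rewrite ler_wpM2r // ltW // bu.
  by rewrite -ltr_pdivlMl // mulrC cvN.
apply: (@le_lt_trans _ _ (`|u m - a| * (`|c| + 1))).
  by rewrite ler_wpM2l // ltW // ltrDl.
by rewrite -ltr_pdivlMr // cuN.
Qed.

Lemma converges_sum n (F : 'I_n -> nat -> R) (L : 'I_n -> R) :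
  (forall i, converges_to (F i) (L i)) ->
  converges_to (fun m => \sum_(i < n) F i m) (\sum_(i < n) L i).
Proof.
elim: n F L => [|n IH] F L cF.
  by rewrite big_ord0; apply: converges_ext (converges_const 0) => m; rewrite big_ord0.
rewrite big_ord_recr; apply: converges_ext (converges_add (IH _ _ (fun i => cF _)) (cF ord_max)).
by move=> m; rewrite big_ord_recr.
Qed.

Lemma converges_prod n (F : 'I_n -> nat -> R) (L : 'I_n -> R) :
  (forall i, converges_to (F i) (L i)) ->
  converges_to (fun m => \prod_(i < n) F i m) (\prod_(i < n) L i).
Proof.
elim: n F L => [|n IH] F L cF.
  by rewrite big_ord0; apply: converges_ext (converges_const 1) => m; rewrite big_ord0.
rewrite big_ord_recr; apply: converges_ext (converges_mul (IH _ _ (fun i => cF _)) (cF ord_max)).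
by move=> m; rewrite big_ord_recr.
Qed.
End LimitAlgebra.

Lemma converges_inv_succ (R : archiRealFieldType) :
  converges_to (fun b => (b.+1%:R : R)^-1) 0.
Proof.
move=> eps eps_gt0; have epsV_ge0 : 0 <= eps^-1 by rewrite invr_ge0 ltW.
exists (Num.bound (eps^-1)) => m le_bm.
rewrite subr0 ger0_norm ?invr_ge0 ?ler0n // -(invrK eps) ltf_pV2 ?posrE ?invr_gt0 ?ltr0Sn //.
by apply: lt_le_trans (archi_boundP epsV_ge0) _; rewrite ler_nat (leq_trans le_bm).
Qed.

Lemma natr_binomial (R : numFieldType) N n :
  ('C(N, n)%:R : R) = (\prod_(t < n) (N - t)%:R) / n`!%:R.
Proof.
have fact_neq0 : (n`!%:R : R) != 0 by rewrite pnatr_eq0 -lt0n fact_gt0.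
by rewrite -natr_prod -ffact_prod -bin_ffact natrM mulfK.
Qed.

Lemma sum_coef_widen (R : nzSemiRingType) (h : {poly R}) (g : nat -> R) d M :
  (size h <= d)%N -> (d <= M)%N -> \sum_(i < M) h`_i * g i = \sum_(i < d) h`_i * g i.
Proof.
move=> size_h le_dM; rewrite [RHS](big_ord_widen _ (fun i => h`_i * g i) le_dM) [RHS]big_mkcond.
apply: eq_bigr => i _; case: ltnP => // le_di.
by rewrite nth_default ?mul0r // (leq_trans size_h).
Qed.

Section Asymptotics.
Variable R : archiRealFieldType.

(* C(n + (b+1) m - l, n) / (b+1)^n -> m^n / n!: each of the n factors
   ((b+1) m + n - l - t) / (b+1) tends to m. *)
Lemma binomial_asymptotic n m l : (0 < m)%N -> (l <= n.+1)%N ->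
  converges_to (fun b => ('C(n + (b.+1 * m - l), n))%:R / (b.+1%:R : R) ^+ n)
               (m%:R ^+ n / n`!%:R).
Proof.
move=> m_gt0 le_ln; pose c (t : 'I_n) : R := n%:R - l%:R - t%:R.
pose approx b := (\prod_(t < n) (m%:R + c t * (b.+1%:R : R)^-1)) / n`!%:R.
apply: (@converges_eventually _ approx _ _ n.+1) => [b le_nb|].
  have le_lbm : (l <= b.+1 * m)%N by have := leq_pmulr b.+1 m_gt0; lia.
  apply/esym; rewrite natr_binomial mulrAC -[X in _ / _ ^+ X](card_ord n) -prodr_const -prodf_div.
  congr (_ / _); apply: eq_bigr => t _.
  have le_tN : (t <= n + (b.+1 * m - l))%N by rewrite (leq_trans (ltnW (ltn_ord t))) ?leq_addr.
  by rewrite natrB // natrD natrB // natrM /c; field; rewrite nat1r pnatr_eq0.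
rewrite -[in X in _ ^+ X](card_ord n) -prodr_const.
apply: converges_mul (converges_const _); apply: converges_prod => t.
have := converges_add (converges_const m%:R) (converges_mul (converges_const (c t)) (@converges_inv_succ R)).
by rewrite mulr0 addr0.
Qed.

(* a_((b+1) m) / (b+1)^n -> h(1) m^n / n!, where a is the series of
   h(x)/(1-x)^(n+1); the case m = 0 uses n >= 1. *)
Lemma series_coef_asymptotic n (h : {poly R}) m : (0 < n)%N -> (size h <= n.+2)%N ->
  converges_to (fun b => ser_coef n h (b.+1 * m) / (b.+1%:R : R) ^+ n)
               (h.[1] * m%:R ^+ n / n`!%:R).
Proof.
move=> n_gt0 size_h; case: m => [|m].
  rewrite expr0n eqn0Ngt n_gt0 mulr0 mul0r.
  apply: (@converges_ext _ (fun b => h`_0 * \prod_(i < n) (b.+1%:R : R)^-1)) => [b|].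
    by rewrite /ser_coef muln0 big_ord1 addn0 binn mulr1 prodr_const card_ord exprVn.
  have := converges_mul (converges_const h`_0)
            (converges_prod (fun _ : 'I_n => @converges_inv_succ R)).
  by rewrite prodr_const card_ord expr0n eqn0Ngt n_gt0 mulr0.
pose trunc b := \sum_(i < n.+2) h`_i * (('C(n + (b.+1 * m.+1 - i), n))%:R / (b.+1%:R : R) ^+ n).
apply: (@converges_eventually _ trunc _ _ n.+1) => [b le_nb|].
  rewrite /trunc /ser_coef (@sum_coef_widen _ h (fun i => ('C(n + (b.+1 * m.+1 - i), n))%:R) n.+2) //.
    by rewrite mulr_suml; apply: eq_bigr => i _; rewrite mulrA.
  by rewrite ltnS (leq_trans le_nb) // (leq_trans (leqnSn b)) // leq_pmulr.
have := converges_sum (fun i : 'I_n.+2 => converges_mul (converges_const h`_i)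
          (@binomial_asymptotic n m.+1 i (ltn0Sn m) (ltn_ord i))).
rewrite (horner_coef_wide _ size_h) !mulr_suml; congr converges_to; apply: eq_bigr => i _.
by rewrite expr1n mulr1 mulrA.
Qed.

Lemma hb_coef_asymptotic n (h : {poly R}) k : (0 < n)%N -> (size h <= n.+2)%N ->
  converges_to (fun b => hb_coef n h b.+1 k / (b.+1%:R : R) ^+ n)
               (h.[1] * eulerian_alt R n k / n`!%:R).
Proof.
move=> n_gt0 size_h.
have lim := converges_sum (fun i : 'I_k.+1 => converges_mul
  (converges_const ((-1) ^+ i * ('C(n.+1, i))%:R))
  (@series_coef_asymptotic n h (k - i) n_gt0 size_h)).
have -> : h.[1] * eulerian_alt R n k / n`!%:R =
    \sum_(i < k.+1) (-1) ^+ i * ('C(n.+1, i))%:R * (h.[1] * (k - i)%:R ^+ n / n`!%:R).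
  by rewrite /eulerian_alt /alt_power_sum mulr_sumr mulr_suml; apply: eq_bigr => i _; ring.
apply: converges_ext lim => b; rewrite /hb_coef mulr_suml.
by apply: eq_bigr => i _; rewrite mulrA.
Qed.
End Asymptotics.

Unset Implicit Arguments. Set Strict Implicit.

Theorem theorem5p1 (R : archiRealFieldType) (n : nat) (h : {poly R}) :
  (1 <= n)%N -> (size h <= n.+2)%N -> h.[1] != 0 ->
  forall k : nat,
    converges_to (fun b : nat => hb_coef n h b.+1 k / ((b.+1)%:R ^+ n * h.[1]))
                 ((eulerian_coef n k)%:R / (n`!)%:R).
Proof.
move=> n_gt0 size_h h1_neq0 k.
have := converges_mul (hb_coef_asymptotic k n_gt0 size_h) (converges_const h.[1]^-1).
rewrite mulrAC [h.[1] * _]mulrC mulfK // -(eulerian_coef_alt R k n_gt0).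
by apply: converges_ext => b; rewrite invfM mulrA.
Qed.
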